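(* There exist a finite-dimensional inner product vector space $(E,g)$ over $k$ ($k=\mathbb R$ or $\mathbb C$), an endomorphism $f\in\operatorname{End}_k(E)$ and $f$-invariant subspaces $\mathcal H_f=\{H_1,\dots,H_n\}$ with $E=H_1\oplus\dots\oplus H_n$ such that $f^+_{\mathcal H_f}\ne f^\dagger$.
   Context: For an endomorphism $h$ of a finite-dimensional inner product space $H$, its Moore-Penrose inverse $h^\dagger$ is the linear map equal to $(h|_{[\operatorname{Ker} h]^\perp})^{-1}$ on $\operatorname{Im} h$ and $0$ on $[\operatorname{Im} h]^\perp$. With $f_i=f|_{H_i}$ and $H_i$ carrying the restricted inner product, $f^+_{\mathcal H_f}$ is the unique endomorphism of $E$ with $f^+_{\mathcal H_f}|_{H_i}=f_i^\dagger$ for each $i$. *)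

From HB Require Import structures.
From mathcomp Require Import all_boot all_order all_algebra.
From mathcomp Require Import complex.
From mathcomp Require Import reals.
Set Implicit Arguments. Unset Strict Implicit. Unset Printing Implicit Defensive.
Import Order.TTheory GRing.Theory Num.Theory.
Local Open Scope ring_scope.

(* Conventions: a finite-dimensional inner product space over k is modelled
   (up to isometric isomorphism) as E = 'rV[K]_m (row vectors, mathcomp's
   convention) with inner product g(u,v) = u G (conj v)^T for a matrix G making
   g Hermitian and positive definite; [c] is the conjugation of k (identity
   for k = R).  Endomorphisms are matrices acting on the right: u |-> u *m f.
   Subspaces are row spaces of square matrices (mxalgebra). *)

Section InnerProduct.
Variable K : numFieldType.
Variable c : K -> K.
Variable m : nat.

Definition ip (G : 'M[K]_m) (u v : 'rV[K]_m) : K :=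
  (u *m G *m (map_mx c v)^T) 0 0.

Definition is_inner_product (G : 'M[K]_m) : Prop :=
  (forall u v, ip G u v = c (ip G v u)) /\
  (forall u, u != 0 -> 0 < ip G u u).

(* [P] is the Moore-Penrose inverse of the restriction f_H = f|_H of f to the
   (f-invariant) subspace H, H carrying the restricted inner product, i.e.
   P|_H = (f_H|_{[Ker f_H]^perp})^{-1} on Im f_H and 0 on [Im f_H]^perp
   (orthogonal complements taken inside H). *)
Definition is_MP_on (G : 'M[K]_m) (H f P : 'M[K]_m) : Prop :=
  (forall y : 'rV[K]_m, (y <= H *m f)%MS ->
     [/\ (y *m P <= H)%MS,
         (forall x : 'rV[K]_m, (x <= H :&: kermx f)%MS -> ip G x (y *m P) = 0)
       & y *m P *m f = y]) /\
  (forall y : 'rV[K]_m, (y <= H)%MS ->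
     (forall x : 'rV[K]_m, (x <= H *m f)%MS -> ip G x y = 0) ->
     y *m P = 0).

Definition is_MP (G f P : 'M[K]_m) : Prop := is_MP_on G 1%:M f P.

(* f^+_{H_f}: the endomorphism of E whose restriction to each H_i is f_i^dagger *)
Definition is_block_MP n (G f : 'M[K]_m) (H : 'I_n -> 'M[K]_m) (P : 'M[K]_m) : Prop :=
  forall i, is_MP_on G (H i) f P.

Definition counterexample_exists : Prop :=
  exists (G f : 'M[K]_m) (n : nat) (H : 'I_n -> 'M[K]_m),
    [/\ is_inner_product G,
        (forall i, stablemx (H i) f),
        (\sum_(i < n) H i :=: 1%:M)%MS
      & mxdirect (\sum_(i < n) H i)] /\
    [/\ (exists P, is_block_MP G f H P),
        (exists Q, is_MP G f Q)
      & (forall P Q, is_block_MP G f H P -> is_MP G f Q -> P != Q)].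
End InnerProduct.

From HB Require Import structures.
From mathcomp Require Import all_boot all_order all_algebra.
From mathcomp Require Import complex.
From mathcomp Require Import reals.
Set Implicit Arguments. Unset Strict Implicit. Unset Printing Implicit Defensive.
Import Order.TTheory GRing.Theory Num.Theory.
Local Open Scope ring_scope.

(* The oblique projection f(a, b) = (b, b) of k^2 onto the line spanned by
   (1, 1) along the line spanned by (1, 0) leaves both lines invariant, acting
   on them as 0 and as the identity; hence f^+_{H_f} = f.  The Moore-Penrose
   inverse of f, however, must send the image of f into [Ker f]^perp, the line
   spanned by (0, 1), so it cannot fix (1, 1). *)

Section Conjugation.
Variable K : numFieldType.
Variable c : K -> K.
Hypothesis conjD : forall a b, c (a + b) = c a + c b.
Hypothesis conjM : forall a b, c (a * b) = c a * c b.
Hypothesis conjK : forall a, c (c a) = a.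
Hypothesis mul_conj_gt0 : forall a, a != 0 -> 0 < a * c a.

Lemma conj0 : c 0 = 0.
Proof. by apply: (addrI (c 0)); rewrite -conjD !addr0. Qed.

Lemma conj_eq0 a : c a = 0 -> a = 0.
Proof. by move=> ca0; rewrite -[a]conjK ca0 conj0. Qed.

Lemma mul_conj_ge0 a : 0 <= a * c a.
Proof. by have [->|/mul_conj_gt0/ltW//] := eqVneq a 0; rewrite mul0r. Qed.

Section GeneralDimension.
Variable m : nat.
Implicit Types (G H f P : 'M[K]_m) (x y u v : 'rV[K]_m).

Lemma ip0l G v : ip c G 0 v = 0.
Proof. by rewrite /ip !mul0mx mxE. Qed.

Lemma ip0r G u : ip c G u 0 = 0.
Proof.
rewrite /ip (_ : map_mx c 0 = 0) ?trmx0 ?mulmx0 ?mxE //.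
by apply/matrixP => i j; rewrite !mxE conj0.
Qed.

Lemma ip1E u v : ip c 1%:M u v = \sum_j u 0 j * c (v 0 j).
Proof. by rewrite /ip mulmx1 mxE; apply: eq_bigr => j _; rewrite !mxE. Qed.

Lemma ip1_inner_product : is_inner_product c (1%:M : 'M[K]_m).
Proof.
split=> [u v|u u_neq0]; rewrite !ip1E.
  rewrite (big_morph c conjD conj0); apply: eq_bigr => j _.
  by rewrite conjM conjK mulrC.
rewrite lt_def sumr_ge0 ?andbT => [|j _]; last exact: mul_conj_ge0.
apply: contra u_neq0 => /eqP sum0; apply/eqP/rowP => j; rewrite mxE.
have /(_ j isT) := psumr_eq0P (fun i _ => mul_conj_ge0 (u 0 i)) sum0.
by have [//|/mul_conj_gt0/lt0r_neq0/eqP] := eqVneq (u 0 j) 0.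
Qed.

Lemma fixed_mulmx H f : (forall y, (y <= H)%MS -> y *m f = y) -> H *m f = H.
Proof. by move=> fixH; apply/row_matrixP => i; rewrite row_mul fixH ?row_sub. Qed.

Lemma is_MP_on_kernel G H f P :
  (H <= kermx f)%MS -> (H <= kermx P)%MS -> is_MP_on c G H f P.
Proof.
move=> /sub_kermxP Hf0 HP; split=> [y|y yH _]; last first.
  by apply/sub_kermxP; apply: submx_trans yH HP.
rewrite Hf0 => /submx0null ->; rewrite !mul0mx sub0mx.
by split=> // x _; rewrite ip0r.
Qed.

Lemma is_MP_on_fixed G H f P :
  is_inner_product c G ->
  (forall y, (y <= H)%MS -> y *m f = y) ->
  (forall y, (y <= H)%MS -> y *m P = y) -> is_MP_on c G H f P.
Proof.
move=> [_ pos] fixH fixP; rewrite /is_MP_on fixed_mulmx //.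
split=> [y yH|y yH orth_y]; first split; rewrite ?fixP ?fixH //.
  move=> x; rewrite sub_capmx => /andP[xH /sub_kermxP xf0].
  by rewrite -(fixH x xH) xf0 ip0l.
have [//|/pos] := eqVneq y 0.
by rewrite orth_y ?ltxx.
Qed.

Lemma is_MP_on_fixed_id G H f P y :
  (forall y, (y <= H)%MS -> y *m f = y) -> is_MP_on c G H f P ->
  (y <= H)%MS -> y *m P = y.
Proof.
move=> fixH [MP_im _] yH; rewrite (fixed_mulmx fixH) in MP_im.
by have [yPH _ yPf] := MP_im y yH; rewrite -{2}yPf fixH.
Qed.

Lemma is_MP_orthogonal_kernel G f Q x y :
  is_MP c G f Q -> (x <= kermx f)%MS -> (y <= f)%MS -> ip c G x (y *m Q) = 0.
Proof.
move=> [MP_im _] xf0 yf; have [|_ orth _] := MP_im y; first by rewrite mul1mx.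
by apply: orth; rewrite sub_capmx submx1.
Qed.

Lemma genmx_fixed f v :
  v *m f = v -> forall y, (y <= <<v>>)%MS -> y *m f = y.
Proof. by move=> vf y; rewrite genmxE => /sub_rVP[a ->]; rewrite -scalemxAl vf. Qed.

Lemma genmx_kernel f v : v *m f = 0 -> (<<v>> <= kermx f)%MS.
Proof. by move=> vf0; rewrite genmxE; apply/sub_kermxP. Qed.

End GeneralDimension.

Definition row2 (a b : K) : 'rV[K]_2 := \row_(j < 2) if j == 0 :> nat then a else b.

Lemma row2_eta (y : 'rV[K]_2) : y = row2 (y 0 0) (y 0 1).
Proof.
by apply/rowP => -[[|[|j]] lt_j2] //; rewrite mxE; congr (y 0 _); apply: val_inj.
Qed.

Lemma row2_eq0 a b : row2 a b = 0 -> a = 0 /\ b = 0.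
Proof. by move=> /rowP eq0; move: (eq0 0) (eq0 1); rewrite !mxE. Qed.

Lemma row2_0 : row2 0 0 = 0.
Proof. by apply/rowP => j; rewrite !mxE; case: ifP. Qed.

Lemma scale_row2 k a b : k *: row2 a b = row2 (k * a) (k * b).
Proof. by apply/rowP => j; rewrite !mxE; case: ifP. Qed.

Lemma add_row2 a b a' b' : row2 a b + row2 a' b' = row2 (a + a') (b + b').
Proof. by apply/rowP => j; rewrite !mxE; case: ifP. Qed.

Lemma mulmx_row2 a b (M : 'M[K]_2) :
  row2 a b *m M = row2 (a * M 0 0 + b * M 1 0) (a * M 0 1 + b * M 1 1).
Proof.
apply/rowP => j; rewrite !mxE !big_ord_recl big_ord0 !mxE /= addr0.
by case: j => -[|[|j]] lt_j2 //=; congr (_ * M _ _ + _ * M _ _); apply: val_inj.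
Qed.

Lemma ip1_row2 a b a' b' : ip c 1%:M (row2 a b) (row2 a' b') = a * c a' + b * c b'.
Proof. by rewrite ip1E !big_ord_recl big_ord0 !mxE /= addr0. Qed.

Definition oblique_proj : 'M[K]_2 :=
  \matrix_(i < 2, j < 2) if i == 0 :> nat then 0 else 1.

Definition oblique_proj_pinv : 'M[K]_2 :=
  \matrix_(i < 2, j < 2) if j == 0 :> nat then 0 else 2^-1.

Definition e_ker := row2 1 0.
Definition e_im := row2 1 1.

Definition proj_lines (i : 'I_2) : 'M[K]_2 :=
  <<if i == 0 :> nat then e_ker else e_im>>%MS.

Lemma oblique_projE a b : row2 a b *m oblique_proj = row2 b b.
Proof. by rewrite mulmx_row2 !mxE /= !mulr0 !mulr1 !add0r. Qed.

Lemma oblique_proj_pinvE a b :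
  row2 a b *m oblique_proj_pinv = row2 0 ((a + b) / 2).
Proof. by rewrite mulmx_row2 !mxE /= !mulr0 !add0r mulrDl. Qed.

Lemma e_ker_proj : e_ker *m oblique_proj = 0.
Proof. by rewrite oblique_projE row2_0. Qed.

Lemma e_im_proj : e_im *m oblique_proj = e_im.
Proof. exact: oblique_projE. Qed.

Lemma proj_lines_stable i : stablemx (proj_lines i) oblique_proj.
Proof.
rewrite /proj_lines (eqmxMr _ (genmxE _)) genmxE.
by case: i => -[|[|i]] //= _; rewrite (e_ker_proj, e_im_proj) ?sub0mx.
Qed.

Lemma proj_lines_sum : (\sum_(i < 2) proj_lines i :=: 1%:M)%MS.
Proof.
apply/eqmxP; rewrite submx1 /=; apply/rV_subP => y _.
have line_sub i : (proj_lines i <= \sum_(i < 2) proj_lines i)%MS.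
  exact: (sumsmx_sup i).
have -> : y = (y 0 0 - y 0 1) *: e_ker + y 0 1 *: e_im.
  by rewrite [LHS]row2_eta !scale_row2 add_row2 !mulr1 mulr0 subrK add0r.
apply: addmx_sub; apply: scalemx_sub.
  by apply: submx_trans (line_sub 0); rewrite genmxE.
by apply: submx_trans (line_sub 1); rewrite genmxE.
Qed.

Lemma proj_lines_direct : mxdirect (\sum_(i < 2) proj_lines i).
Proof.
rewrite mxdirectEgeq /= proj_lines_sum mxrank1.
rewrite !big_ord_recl big_ord0 addn0 /proj_lines !genmxE.
by rewrite -[2%N]/(1 + 1)%N leq_add ?rank_leq_row.
Qed.

Lemma oblique_proj_block_MP :
  is_block_MP c 1%:M oblique_proj proj_lines oblique_proj.
Proof.
move=> -[[|[|i]] lt_i2] //; rewrite /proj_lines /=.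
  by apply: is_MP_on_kernel; apply: genmx_kernel e_ker_proj.
by apply: is_MP_on_fixed; [exact: ip1_inner_product | apply: genmx_fixed e_im_proj ..].
Qed.

Lemma half_double (b : K) : (b + b) / 2 = b.
Proof. by rewrite -mulr2n -[b *+ 2]mulr_natr mulfK ?pnatr_eq0. Qed.

Lemma oblique_proj_MP : is_MP c 1%:M oblique_proj oblique_proj_pinv.
Proof.
rewrite /is_MP /is_MP_on mul1mx; split=> [y /submxP[x ->]|y _ orth_y].
  rewrite [x]row2_eta oblique_projE oblique_proj_pinvE half_double.
  split; rewrite ?submx1 ?oblique_projE // => z.
  rewrite sub_capmx submx1 [z]row2_eta => /sub_kermxP.
  by rewrite oblique_projE => /row2_eq0[_ ->]; rewrite ip1_row2 conj0 mulr0 mul0r addr0.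
have /orth_y : (e_im <= oblique_proj)%MS.
  by apply/submxP; exists (row2 0 1); rewrite oblique_projE.
rewrite [y]row2_eta ip1_row2 !mul1r -conjD => /conj_eq0 sum0.
by rewrite oblique_proj_pinvE sum0 mul0r row2_0.
Qed.

Lemma oblique_proj_block_MP_neq_MP P Q :
  is_block_MP c 1%:M oblique_proj proj_lines P ->
  is_MP c 1%:M oblique_proj Q -> P != Q.
Proof.
move=> blockP MPQ; apply/eqP => PQ; subst Q.
have e_imP : e_im *m P = e_im.
  apply: (is_MP_on_fixed_id (genmx_fixed e_im_proj) (blockP 1)).
  by rewrite genmxE.
have : ip c 1%:M e_ker (e_im *m P) = 0.
  apply: is_MP_orthogonal_kernel MPQ _ _; first exact/sub_kermxP/e_ker_proj.
  by apply/submxP; exists e_im; rewrite e_im_proj.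
rewrite e_imP ip1_row2 mul1r mul0r addr0 => /conj_eq0/eqP.
by rewrite oner_eq0.
Qed.

Lemma oblique_proj_counterexample : counterexample_exists c 2.
Proof.
exists 1%:M, oblique_proj, 2%N, proj_lines; split; split.
- exact: ip1_inner_product.
- exact: proj_lines_stable.
- exact: proj_lines_sum.
- exact: proj_lines_direct.
- by exists oblique_proj; exact: oblique_proj_block_MP.
- by exists oblique_proj_pinv; exact: oblique_proj_MP.
- exact: oblique_proj_block_MP_neq_MP.
Qed.

End Conjugation.

Theorem corollary3p5 :
  (forall R : realType, exists m : nat, @counterexample_exists R id m) /\
  (forall R : realType, exists m : nat, @counterexample_exists R[i] Num.conj m).
Proof.
split=> R; exists 2%N; apply: oblique_proj_counterexample => //.
- by move=> a a_neq0; rewrite lt0r sqr_ge0 andbT mulf_neq0.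
- exact: rmorphD.
- exact: rmorphM.
- exact: conjCK.
- by move=> a a_neq0; rewrite mul_conjC_gt0.
Qed.
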